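(* Let $L\in\mathbb{R}^{n\times n}$ be the Laplacian of an undirected unweighted graph on $n$ nodes, let $s \in \mathbb{R}^n$ be a mean-zero innate opinion vector and $z = (I+L)^{-1}s$. Let $(u_1,v_1)$ ($u_1\ne v_1$) be a pair of nodes not joined by an edge and $(u_2,v_2)$ an edge of the graph, with edge Laplacians $E_k = \chi_{u_k,v_k}\chi_{u_k,v_k}^T$ and $\delta_k = z(u_k)-z(v_k)$ for $k=1,2$. If $|\delta_2| > \frac{3\sqrt3}{4}\,|\delta_1|$, then $$PD(L+E_1-E_2) > PD(L).$$
   Context: $\chi_{u,v}\in\mathbb{R}^n$ is the vector with $1$ in coordinate $u$, $-1$ in coordinate $v$ and $0$ elsewhere. Friedkin–Johnsen model: expressed opinions $z=(I+L)^{-1}s$. With $s$ fixed, the polarization+disagreement of a graph with Laplacian $M$ is $PD(M) = s^T (I+M)^{-1} s$. *)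

From mathcomp Require Import all_boot all_order all_algebra.
Set Implicit Arguments. Unset Strict Implicit. Unset Printing Implicit Defensive.
Import Order.TTheory GRing.Theory Num.Theory.
Local Open Scope ring_scope.

Definition simple_graph (n : nat) (adj : rel 'I_n) : Prop :=
  symmetric adj /\ irreflexive adj.

Definition laplacian (R : rcfType) (n : nat) (adj : rel 'I_n) : 'M[R]_n :=
  \matrix_(i, j) (if i == j then (#|[set k | adj i k]|)%:R
                  else if adj i j then -1 else 0).

Definition chi (R : rcfType) (n : nat) (u v : 'I_n) : 'cV[R]_n :=
  \col_i ((i == u)%:R - (i == v)%:R).

Definition edgeLap (R : rcfType) (n : nat) (u v : 'I_n) : 'M[R]_n :=
  chi R u v *m (chi R u v)^T.

Definition fj_opinions (R : rcfType) (n : nat) (M : 'M[R]_n) (s : 'cV[R]_n)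
  : 'cV[R]_n := invmx (1%:M + M) *m s.

Definition PD (R : rcfType) (n : nat) (s : 'cV[R]_n) (M : 'M[R]_n) : R :=
  ((s^T *m invmx (1%:M + M) *m s) 0 0).

From mathcomp Require Import all_boot all_order all_algebra.
From mathcomp Require Import ring lra.
Import Order.TTheory GRing.Theory Num.Theory.
Local Open Scope ring_scope.

Set Implicit Arguments.
Unset Strict Implicit.

(* For a symmetric positive definite B, the map x |-> 2 s^T x - x^T B x is
   maximised at x = B^-1 s with value s^T B^-1 s.  Evaluating it at the old
   opinions z = (I + L)^-1 s, with B = I + L + E1 - E2 (positive definite
   because L - E2 is the Laplacian of the graph without the edge (u2,v2)),
   gives PD(L + E1 - E2) >= PD(L) + delta2^2 - delta1^2.  So |delta2| > |delta1|
   already suffices, and 3 sqrt 3 / 4 >= 1. *)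

Section QuadraticForms.
Variables (R : rcfType) (n : nat).
Implicit Types (M N : 'M[R]_n) (x y : 'cV[R]_n).

Definition qform M x : R := (x^T *m M *m x) 0 0.

Lemma qformD M N x : qform (M + N) x = qform M x + qform N x.
Proof. by rewrite /qform mulmxDr mulmxDl mxE. Qed.

Lemma qformB M N x : qform (M - N) x = qform M x - qform N x.
Proof. by rewrite /qform mulmxBr mulmxBl !mxE. Qed.

Lemma qform1 x : qform 1%:M x = \sum_i x i 0 ^+ 2.
Proof. by rewrite /qform mulmx1 mxE; apply: eq_bigr => i _; rewrite mxE expr2. Qed.

Lemma dotmxC x y : (x^T *m y) 0 0 = (y^T *m x) 0 0.
Proof. by rewrite -{1}(trmxK y) -trmx_mul mxE. Qed.

Lemma sqr_sum_ge0 x : 0 <= \sum_i x i 0 ^+ 2.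
Proof. by apply: sumr_ge0 => i _; apply: sqr_ge0. Qed.

Lemma sqr_sum_eq0 x : \sum_i x i 0 ^+ 2 = 0 -> x = 0.
Proof.
move=> x0; apply/matrixP => i j; rewrite ord1 mxE.
have /(_ i isT) /eqP := psumr_eq0P (fun k _ => sqr_ge0 (x k 0)) x0.
by rewrite sqrf_eq0 => /eqP.
Qed.

Lemma unitmx_qform_ge M :
  (forall x, \sum_i x i 0 ^+ 2 <= qform M x) -> M \in unitmx.
Proof.
move=> posM; rewrite unitmxE unitfE; apply/negP => /det0P [v v_neq0 vM0].
have := posM v^T; rewrite /qform trmxK vM0 mul0mx mxE => vv_le0.
have /sqr_sum_eq0 /(congr1 trmx) : \sum_i v^T i 0 ^+ 2 = 0.
  by apply/le_anti; rewrite vv_le0 sqr_sum_ge0.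
by rewrite trmxK trmx0 => v0; rewrite v0 eqxx in v_neq0.
Qed.

Lemma qform_invmx_ge M (s : 'cV[R]_n) x : M^T = M -> M \in unitmx ->
  (forall y, 0 <= qform M y) ->
  2%:R * (s^T *m x) 0 0 - qform M x <= (s^T *m invmx M *m s) 0 0.
Proof.
move=> symM unitM psdM; set y := invmx M *m s.
have My : M *m y = s by rewrite mulKVmx.
have yM : y^T *m M = s^T by rewrite -{1}symM -trmx_mul My.
have : 0 <= qform M (y - x) := psdM _.
have -> : qform M (y - x) = ((y^T - x^T) *m M *m (y - x)) 0 0.
  by rewrite /qform [(y - x)^T]raddfB.
rewrite !mulmxBl !mulmxBr yM -[x^T *m M *m y]mulmxA My.
rewrite -[s^T *m invmx M *m s]mulmxA -/y /qform.
move: (dotmxC s x); move: (s^T *m y) (s^T *m x) (x^T *m s) (x^T *m M *m x).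
by move=> a b c d bc; rewrite !mxE bc; lra.
Qed.

End QuadraticForms.

Section GraphLaplacians.
Variables (R : rcfType) (n : nat).
Implicit Types (x : 'cV[R]_n) (u v : 'I_n).

Lemma chi_dot u v x : ((chi R u v)^T *m x) 0 0 = x u 0 - x v 0.
Proof.
have pick w : \sum_i (i == w)%:R * x i 0 = x w 0.
  by rewrite (bigD1 w) //= eqxx mul1r big1 ?addr0 // => i /negbTE ->; rewrite mul0r.
rewrite mxE; under eq_bigr => i _ do rewrite !mxE mulrBl.
by rewrite sumrB !pick.
Qed.

Lemma qform_edgeLap u v x : qform (edgeLap R u v) x = (x u 0 - x v 0) ^+ 2.
Proof.
rewrite /qform /edgeLap mulmxA -mulmxA -{1}(trmxK (chi R u v)) -trmx_mul.
by rewrite mxE big_ord1 mxE chi_dot expr2.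
Qed.

Lemma edgeLap_sym u v : (edgeLap R u v)^T = edgeLap R u v.
Proof. by rewrite /edgeLap trmx_mul trmxK. Qed.

Variable adj : rel 'I_n.
Hypotheses (adj_sym : symmetric adj) (adj_irr : irreflexive adj).

Lemma laplacian_sym : (laplacian R adj)^T = laplacian R adj.
Proof.
by apply/matrixP => i j; rewrite !mxE eq_sym adj_sym; case: eqP => // ->.
Qed.

Lemma laplacian_mulmx x i :
  (laplacian R adj *m x) i 0 = \sum_j (adj i j)%:R * (x i 0 - x j 0).
Proof.
have deg : (#|[set k | adj i k]|)%:R = \sum_j (adj i j)%:R :> R.
  rewrite cardsE -sum1_card natr_sum big_mkcond /=.
  by apply: eq_bigr => j _; rewrite unfold_in; case: (adj i j).
rewrite mxE (bigD1 i) //= [RHS](bigD1 i) //= adj_irr mul0r add0r.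
rewrite !mxE eqxx deg (bigD1 i) //= adj_irr add0r mulr_suml -big_split /=.
apply: eq_bigr => j /negbTE ij; rewrite mxE eq_sym ij.
by case: (adj i j) => /=; ring.
Qed.

(* Each unordered edge is counted twice, hence the factor 2. *)
Lemma qform_laplacian x :
  2%:R * qform (laplacian R adj) x
  = \sum_i \sum_j (adj i j)%:R * (x i 0 - x j 0) ^+ 2.
Proof.
have L1 : qform (laplacian R adj) x
          = \sum_i \sum_j (adj i j)%:R * (x i 0 ^+ 2 - x i 0 * x j 0).
  rewrite /qform -mulmxA mxE; apply: eq_bigr => i _.
  rewrite laplacian_mulmx !mxE mulr_sumr.
  by apply: eq_bigr => j _; ring.
have L2 : qform (laplacian R adj) x
          = \sum_i \sum_j (adj i j)%:R * (x j 0 ^+ 2 - x j 0 * x i 0).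
  rewrite L1 exchange_big /=; apply: eq_bigr => i _; apply: eq_bigr => j _.
  by rewrite adj_sym.
rewrite mulr2n mulrDl mul1r {1}L1 L2 -big_split; apply: eq_bigr => i _ /=.
by rewrite -big_split; apply: eq_bigr => j _ /=; ring.
Qed.

Lemma qform_laplacian_ge0 x : 0 <= qform (laplacian R adj) x.
Proof.
have : 0 <= 2%:R * qform (laplacian R adj) x.
  rewrite qform_laplacian; apply: sumr_ge0 => i _; apply: sumr_ge0 => j _.
  by rewrite mulr_ge0 ?ler0n ?sqr_ge0.
by rewrite pmulr_rge0 ?ltr0n.
Qed.

Lemma qform_laplacian_ge_edge u v x : adj u v ->
  qform (edgeLap R u v) x <= qform (laplacian R adj) x.
Proof.
move=> uv; rewrite qform_edgeLap.
have uv_neq : u != v by apply: contraTneq uv => ->; rewrite adj_irr.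
set e := fun i j => (adj i j)%:R * (x i 0 - x j 0) ^+ 2 : R.
have e_ge0 i j : 0 <= e i j by rewrite mulr_ge0 ?ler0n ?sqr_ge0.
have edge_le i j : adj i j -> (x i 0 - x j 0) ^+ 2 <= \sum_k e i k.
  move=> ij; rewrite (bigD1 j) //= {1}/e ij mul1r lerDl.
  by apply: sumr_ge0 => k _.
have : (x u 0 - x v 0) ^+ 2 + (x u 0 - x v 0) ^+ 2 <= \sum_i \sum_k e i k.
  rewrite (bigD1 u) //= [\sum_(i | i != u) _](bigD1 v) ?(eq_sym v) //=.
  rewrite addrA -[X in X <= _]addr0 lerD ?lerD ?edge_le //.
  - by rewrite -sqrrN opprB edge_le // adj_sym.
  - by apply: sumr_ge0 => i _; apply: sumr_ge0.
rewrite -qform_laplacian; lra.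
Qed.

End GraphLaplacians.

Lemma PD_swap_edge_ge (R : rcfType) (n : nat) (adj : rel 'I_n) (s : 'cV[R]_n)
    (u1 v1 u2 v2 : 'I_n) (L := laplacian R adj) (z := fj_opinions L s) :
  symmetric adj -> irreflexive adj -> adj u2 v2 ->
  PD s L + (z u2 0 - z v2 0) ^+ 2 - (z u1 0 - z v1 0) ^+ 2
    <= PD s (L + edgeLap R u1 v1 - edgeLap R u2 v2).
Proof.
move=> adj_sym adj_irr uv2.
set B := 1%:M + (L + edgeLap R u1 v1 - edgeLap R u2 v2).
have qform_B (x : 'cV[R]_n) : qform B x = \sum_i x i 0 ^+ 2 + qform L x
    + (x u1 0 - x v1 0) ^+ 2 - qform (edgeLap R u2 v2) x.
  by rewrite !(qformB, qformD) qform1 qform_edgeLap !addrA.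
have posB (x : 'cV[R]_n) : \sum_i x i 0 ^+ 2 <= qform B x.
  have := qform_laplacian_ge_edge adj_sym adj_irr x uv2.
  by rewrite qform_B; have := sqr_ge0 (x u1 0 - x v1 0); lra.
have symB : B^T = B.
  by rewrite !(raddfD, raddfN) /= trmx1 laplacian_sym // !edgeLap_sym.
have unitA : 1%:M + L \in unitmx.
  apply: unitmx_qform_ge => x; rewrite qformD qform1 lerDl.
  exact: qform_laplacian_ge0.
have Az : (1%:M + L) *m z = s by rewrite mulKVmx.
have PD_L : PD s L = (s^T *m z) 0 0 by rewrite /PD -mulmxA.
have qform_z : qform B z = PD s L + (z u1 0 - z v1 0) ^+ 2 - (z u2 0 - z v2 0) ^+ 2.
  by rewrite qform_B qform_edgeLap -qform1 -qformD /qform -mulmxA Az dotmxC PD_L.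
have : 2%:R * (s^T *m z) 0 0 - qform B z
       <= PD s (L + edgeLap R u1 v1 - edgeLap R u2 v2).
  exact: qform_invmx_ge symB (unitmx_qform_ge posB)
           (fun y => le_trans (sqr_sum_ge0 y) (posB y)).
by rewrite qform_z -PD_L; lra.
Qed.

Lemma sqr_lt_of_scaled_norm_lt (R : realDomainType) (c a b : R) :
  1 <= c -> c * `|a| < `|b| -> a ^+ 2 < b ^+ 2.
Proof.
move=> c_ge1 cab.
have ab : `|a| < `|b| by apply: le_lt_trans cab; rewrite ler_peMl.
by rewrite -(real_normK (num_real a)) -(real_normK (num_real b)) !expr2 ltr_pM.
Qed.

Lemma three_sqrt3_div4_ge1 (R : rcfType) : 1 <= 3%:R * Num.sqrt 3%:R / 4%:R :> R.
Proof.
have t_ge0 : 0 <= Num.sqrt (3%:R : R) by apply: sqrtr_ge0.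
have t_sq : Num.sqrt (3%:R : R) ^+ 2 = 3%:R by rewrite sqr_sqrtr // ler0n.
move: t_ge0 t_sq; set t := Num.sqrt _; rewrite expr2 => *; nra.
Qed.

Theorem mainTheorem8 (R : rcfType) (n : nat) (adj : rel 'I_n)
  (s : 'cV[R]_n) (u1 v1 u2 v2 : 'I_n) :
  simple_graph adj ->
  \sum_(i < n) s i 0 = 0 ->
  u1 != v1 -> ~~ adj u1 v1 ->
  adj u2 v2 ->
  let L := laplacian R adj in
  let z := fj_opinions L s in
  let delta1 := z u1 0 - z v1 0 in
  let delta2 := z u2 0 - z v2 0 in
  `|delta2| > 3%:R * Num.sqrt 3%:R / 4%:R * `|delta1| ->
  PD s (L + edgeLap R u1 v1 - edgeLap R u2 v2) > PD s L.
Proof.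
move=> [adj_sym adj_irr] _ _ _ uv2 L z d1 d2 big_d2.
have := PD_swap_edge_ge s u1 v1 adj_sym adj_irr uv2.
have := sqr_lt_of_scaled_norm_lt (three_sqrt3_div4_ge1 R) big_d2.
rewrite -/L -/z -/d1 -/d2; lra.
Qed.
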